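(* Let $B$ be a real number with $1\le B<\infty$ and $\varepsilon=2^{-B}$. Let $n\ge1$, $x^n\in\mathcal{X}^n$, and $\mathbf{P}^n=\mathbf{P}_1,\dots,\mathbf{P}_n$ a sequence of probability matrices over $\mathcal{P}_\varepsilon$ (with $m$ models; write $p_{k,i}$ for the $i$-th model distribution of $\mathbf{P}_k$). For $1\le k\le l\le n$ let $\ell^*(k,l,\textsc{best}):=\min_{1\le i\le m}\sum_{j=k}^l-\log_2p_{j,i}(x_j)$. Minima below range over all $1\le s\le n$ and integers $t_1=1<t_2<\dots<t_s<t_{s+1}=n+1$. Then for every $\mathbf{w}_1\in\mathcal{S}$, Algorithm $\textsc{mix-ogd}$ with parameter space $\mathcal{W}=\mathcal{S}$ satisfies, writing $L:=\ell(x^n,\textsc{mix-ogd}(\mathbf{w}_1,\alpha,x^n,\mathbf{P}^n))$: 1. for $\textsc{mix}=\textsc{lin}$ and $\alpha=\frac{8B}{17m4^B}$: $L\le\min_{s,t_2,\dots,t_s}\big[2\sum_{i=1}^s\ell^*(t_i,t_{i+1}-1,\textsc{best})+\frac{17ms4^B}{4B}\big]$; 2. for $\textsc{mix}=\textsc{lin}$ and $\alpha=\frac{8B/\sqrt n}{17m4^B}$: $L\le\min_{s,t_2,\dots,t_s}\big[\sum_{i=1}^s\ell^*(t_i,t_{i+1}-1,\textsc{best})+\frac{35ms4^B}{4B}\sqrt n\big]$; 3. for $\textsc{mix}=\textsc{geo}$ and $\alpha=\frac{10}{7mB^2}$: $L\le\min_{s,t_2,\dots,t_s}\big[2\sum_{i=1}^s\ell^*(t_i,t_{i+1}-1,\textsc{best})+\frac{7msB^2}{5}\big]$;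 4. for $\textsc{mix}=\textsc{geo}$ and $\alpha=\frac{10/\sqrt n}{7mB^2}$: $L\le\min_{s,t_2,\dots,t_s}\big[\sum_{i=1}^s\ell^*(t_i,t_{i+1}-1,\textsc{best})+\frac{19msB^2}{10}\sqrt n\big]$.
   Context: $\mathcal{X}=\{1,\dots,N\}$, $1<N<\infty$; $m>1$. $\mathcal{P}_\varepsilon$ is the set of probability distributions on $\mathcal{X}$ assigning probability at least $\varepsilon$ to every letter. A probability matrix over $\mathcal{P}_\varepsilon$ is $\mathbf{P}=(\mathbf{p}(1)\cdots\mathbf{p}(N))$ with $\mathbf{p}(x)=(p_1(x),\dots,p_m(x))^{\mathsf T}$, $p_i\in\mathcal{P}_\varepsilon$. $\mathcal{S}=\{\mathbf{w}\in\mathbb{R}^m:\mathbf{w}\ge0,\ \sum_iw_i=1\}$. $\ell(x,p):=-\log_2p(x)$. Linear mixture: $\textsc{lin}(x;\mathbf{w},\mathbf{P}):=\mathbf{w}^{\mathsf T}\mathbf{p}(x)$; geometric mixture: $\textsc{geo}(x;\mathbf{w},\mathbf{P}):=\prod_ip_i(x)^{w_i}/\sum_{y\in\mathcal{X}}\prod_ip_i(y)^{w_i}$. Algorithm $\textsc{mix-ogd}(\mathbf{w}_1,\alpha,x^n,\mathbf{P}^n)$ for a mixture $\textsc{mix}$ with parameter space $\mathcal{W}$: for $k=1,\dots,n$ code $x_k$ with $\ell(x_k,\textsc{mix}(\mathbf{w}_k,\mathbf{P}_k))$ bits and set $\mathbf{w}_{k+1}=\mathrm{proj}(\mathbf{w}_k-\alpha\nabla_{\mathbf{w}}\ell(x_k,\textsc{mix}(\mathbf{w},\mathbf{P}_k))|_{\mathbf{w}=\mathbf{w}_k};\mathcal{W})$,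 where $\mathrm{proj}(\mathbf{v};\mathcal{W})=\arg\min_{\mathbf{w}\in\mathcal{W}}\lvert\mathbf{v}-\mathbf{w}\rvert^2$ (Euclidean). Its total code length is $\ell(x^n,\textsc{mix-ogd}(\mathbf{w}_1,\alpha,x^n,\mathbf{P}^n)):=\sum_{k=1}^n\ell(x_k,\textsc{mix}(\mathbf{w}_k,\mathbf{P}_k))$. *)

From Stdlib Require Import Reals.
From Coquelicot Require Import Coquelicot.
Open Scope R_scope.

(* Conventions: letters of X = {1,..,N} are encoded as 0..N-1;
   models i = 1..m are encoded as 0..m-1;
   time steps k = 1..n are kept as 1..n.
   A distribution on X is p : nat -> R (only values at 0..N-1 matter).
   A probability matrix is P : nat -> nat -> R, P i y = p_i(y).
   A weight vector is w : nat -> R, coordinates 0..m-1 (others forced 0 in S). *)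

Fixpoint sumN (n : nat) (f : nat -> R) : R :=
  match n with O => 0 | S n' => sumN n' f + f n' end.

Fixpoint prodN (n : nat) (f : nat -> R) : R :=
  match n with O => 1 | S n' => prodN n' f * f n' end.

(* minN n f = min (f 0, ..., f n) *)
Fixpoint minN (n : nat) (f : nat -> R) : R :=
  match n with O => f O | S n' => Rmin (minN n' f) (f n) end.

Definition log2 (x : R) : R := ln x / ln 2.

Definition codelen (x : nat) (p : nat -> R) : R := - log2 (p x).

Definition in_Peps (N : nat) (eps : R) (p : nat -> R) : Prop :=
  (forall y, (y < N)%nat -> eps <= p y) /\ sumN N p = 1.

Definition prob_matrix (N m : nat) (eps : R) (P : nat -> nat -> R) : Prop :=
  forall i, (i < m)%nat -> in_Peps N eps (P i).

Definition simplex (m : nat) (w : nat -> R) : Prop :=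
  (forall i, (m <= i)%nat -> w i = 0) /\
  (forall i, (i < m)%nat -> 0 <= w i) /\ sumN m w = 1.

Definition dist2 (m : nat) (v w : nat -> R) : R :=
  sumN m (fun i => (v i - w i) ^ 2).

Definition is_simplex_proj (m : nat) (proj : (nat -> R) -> (nat -> R)) : Prop :=
  forall v, simplex m (proj v) /\
    (forall w, simplex m w -> dist2 m v (proj v) <= dist2 m v w).

Definition lin (m : nat) (w : nat -> R) (P : nat -> nat -> R) (y : nat) : R :=
  sumN m (fun i => w i * P i y).

Definition geo (N m : nat) (w : nat -> R) (P : nat -> nat -> R) (y : nat) : R :=
  prodN m (fun i => Rpower (P i y) (w i)) /
  sumN N (fun z => prodN m (fun i => Rpower (P i z) (w i))).

Definition mixture := (nat -> R) -> (nat -> nat -> R) -> nat -> R.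

Definition shift (w : nat -> R) (i : nat) (t : R) : nat -> R :=
  fun j => if Nat.eqb j i then w j + t else w j.

Definition is_grad (N m : nat) (eps : R) (mix : mixture)
  (G : (nat -> R) -> (nat -> nat -> R) -> nat -> nat -> R) : Prop :=
  forall w P x i, simplex m w -> prob_matrix N m eps P -> (x < N)%nat -> (i < m)%nat ->
    is_derive (fun t : R => codelen x (mix (shift w i t) P)) 0 (G w P x i).

(* Weights of MIX-OGD: ogd_w ... d = w_{d+1}; the sequence x and matrices P
   are indexed by time 1..n. *)
Fixpoint ogd_w (mix : mixture)
  (G : (nat -> R) -> (nat -> nat -> R) -> nat -> nat -> R)
  (proj : (nat -> R) -> (nat -> R)) (w1 : nat -> R) (alpha : R)
  (x : nat -> nat) (P : nat -> nat -> nat -> R) (d : nat) : nat -> R :=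
  match d with
  | O => w1
  | S d' => let w := ogd_w mix G proj w1 alpha x P d' in
            proj (fun i => w i - alpha * G w (P d) (x d) i)
  end.

Definition ogd_len (mix : mixture)
  (G : (nat -> R) -> (nat -> nat -> R) -> nat -> nat -> R)
  (proj : (nat -> R) -> (nat -> R)) (w1 : nat -> R) (alpha : R)
  (x : nat -> nat) (P : nat -> nat -> nat -> R) (n : nat) : R :=
  sumN n (fun d => codelen (x (S d)) (mix (ogd_w mix G proj w1 alpha x P d) (P (S d)))).

Definition lstar (m : nat) (x : nat -> nat) (P : nat -> nat -> nat -> R) (k l : nat) : R :=
  minN (m - 1) (fun i => sumN (S l - k) (fun d => codelen (x (k + d)%nat) (P (k + d)%nat i))).

Definition segmentation (n s : nat) (t : nat -> nat) : Prop :=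
  (1 <= s <= n)%nat /\ t 1%nat = 1%nat /\ t (S s) = S n /\
  (forall i, (1 <= i <= s)%nat -> (t i < t (S i))%nat).

Definition seg_best (m : nat) (x : nat -> nat) (P : nat -> nat -> nat -> R)
  (s : nat) (t : nat -> nat) : R :=
  sumN s (fun d => lstar m x P (t (S d)) (t (S (S d)) - 1)).

(* On every segment of a segmentation, projected online gradient descent on the simplex pays
   at most [1/alpha + alpha/2 * sum |g_k|^2] more than the best single model: the code length is
   convex in the weights (tangent inequalities for [-log] of a linear form and for log-sum-exp),
   projection onto the simplex is non-expansive, and the initial squared distance to a vertex is
   at most 2. Summed over the [s] segments this gives [s/alpha].  For both mixtures the gradient
   is explicit.  Its squared norm is bounded ([m 4^B / ln^2 2], resp. [m B^2]), which gives the
   [sqrt n] rates; it is also bounded by [1/alpha] times the code length itself, so the gradient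
   term can be absorbed into the left-hand side at the price of a factor 2, which gives the
   constant-step rates. *)

From Stdlib Require Import Reals Lra Lia Factorial.
From Coquelicot Require Import Coquelicot.
Open Scope R_scope.

Lemma sumN_ext n f g : (forall i, (i < n)%nat -> f i = g i) -> sumN n f = sumN n g.
Proof.
  induction n as [|n IH]; intros H; simpl; [reflexivity|].
  rewrite IH, H; auto; intros; apply H; lia.
Qed.

Lemma sumN_le n f g : (forall i, (i < n)%nat -> f i <= g i) -> sumN n f <= sumN n g.
Proof.
  induction n as [|n IH]; intros H; simpl; [lra|].
  assert (f n <= g n) by (apply H; lia).
  assert (sumN n f <= sumN n g) by (apply IH; intros; apply H; lia).
  lra.
Qed.

Lemma sumN_plus n f g : sumN n (fun i => f i + g i) = sumN n f + sumN n g.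
Proof. induction n as [|n IH]; simpl; [lra|]. rewrite IH. ring. Qed.

Lemma sumN_minus n f g : sumN n (fun i => f i - g i) = sumN n f - sumN n g.
Proof. induction n as [|n IH]; simpl; [lra|]. rewrite IH. ring. Qed.

Lemma sumN_scal n c f : sumN n (fun i => c * f i) = c * sumN n f.
Proof. induction n as [|n IH]; simpl; [lra|]. rewrite IH. ring. Qed.

Lemma sumN_const n c : sumN n (fun _ => c) = INR n * c.
Proof. induction n as [|n IH]; simpl sumN; [simpl; lra|]. rewrite IH, S_INR. ring. Qed.

Lemma sumN_add a b f : sumN (a + b) f = sumN a f + sumN b (fun e => f (a + e)%nat).
Proof.
  induction b as [|b IH]; simpl; [rewrite Nat.add_0_r; lra|].
  rewrite Nat.add_succ_r. simpl. rewrite IH. ring.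
Qed.

Lemma sumN_swap n k (f : nat -> nat -> R) :
  sumN n (fun i => sumN k (fun j => f i j)) = sumN k (fun j => sumN n (fun i => f i j)).
Proof.
  induction n as [|n IH]; simpl.
  - induction k as [|k IHk]; simpl; [reflexivity|]. rewrite <- IHk. ring.
  - rewrite IH, <- sumN_plus. reflexivity.
Qed.

Lemma sumN_nonneg n f : (forall i, (i < n)%nat -> 0 <= f i) -> 0 <= sumN n f.
Proof. intros H. rewrite <- (Rmult_0_r (INR n)), <- sumN_const. apply sumN_le. auto. Qed.

Lemma sumN_pos n f : (0 < n)%nat -> (forall i, (i < n)%nat -> 0 < f i) -> 0 < sumN n f.
Proof.
  intros Hn H. destruct n as [|n]; [lia|]. simpl.
  assert (0 < f n) by (apply H; lia).
  assert (0 <= sumN n f) by (apply sumN_nonneg; intros; left; apply H; lia).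
  lra.
Qed.

Lemma sumN_indicator n j a f : (j < n)%nat ->
  sumN n (fun i => (if Nat.eqb i j then a else 0) * f i) = a * f j.
Proof.
  induction n as [|n IH]; intros Hj; [lia|]. simpl.
  destruct (Nat.eqb n j) eqn:E.
  - apply Nat.eqb_eq in E. subst.
    rewrite (sumN_ext _ _ (fun _ => 0 * 0)), sumN_scal; [ring|].
    intros i Hi. destruct (Nat.eqb_spec i j); [lia|ring].
  - apply Nat.eqb_neq in E. rewrite IH by lia. ring.
Qed.

Lemma sumN_two_terms_le n f a b : (forall i, (i < n)%nat -> 0 <= f i) ->
  (a < n)%nat -> (b < n)%nat -> a <> b -> f a + f b <= sumN n f.
Proof.
  intros H Ha Hb Hab.
  rewrite <- (Rmult_1_l (f a)), <- (sumN_indicator n a 1 f Ha).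
  rewrite <- (Rmult_1_l (f b)), <- (sumN_indicator n b 1 f Hb), <- sumN_plus.
  apply sumN_le. intros i Hi. specialize (H i Hi).
  destruct (Nat.eqb_spec i a), (Nat.eqb_spec i b); subst; lra || lia.
Qed.

Lemma sumN_term_le n f j : (forall i, (i < n)%nat -> 0 <= f i) -> (j < n)%nat -> f j <= sumN n f.
Proof.
  intros H Hj. rewrite <- (Rmult_1_l (f j)), <- (sumN_indicator n j 1 f Hj).
  apply sumN_le. intros i Hi. specialize (H i Hi). destruct (Nat.eqb i j); lra.
Qed.

Lemma Rabs_sumN n f : Rabs (sumN n f) <= sumN n (fun i => Rabs (f i)).
Proof.
  induction n as [|n IH]; simpl; [rewrite Rabs_R0; lra|].
  eapply Rle_trans; [apply Rabs_triang|lra].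
Qed.

Lemma is_derive_sumN K (f : nat -> R -> R) (df : nat -> R) t0 :
  (forall k, (k < K)%nat -> is_derive (f k) t0 (df k)) ->
  is_derive (fun t => sumN K (fun k => f k t)) t0 (sumN K df).
Proof.
  induction K as [|K IH]; intros H; simpl.
  - apply (is_derive_const (V := R_NormedModule)).
  - apply (is_derive_plus (fun t => sumN K (fun k => f k t)) (f K)).
    + apply IH; intros; apply H; lia.
    + apply H; lia.
Qed.

Lemma le_minN_plus k F A C : (forall j, (j <= k)%nat -> A <= F j + C) -> A <= minN k F + C.
Proof.
  induction k as [|k IH]; simpl; intros H; [apply H; lia|].
  apply Rmin_case; [apply IH; intros|]; apply H; lia.
Qed.

Lemma minN_ext k F F' : (forall j, (j <= k)%nat -> F j = F' j) -> minN k F = minN k F'.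
Proof.
  induction k as [|k IH]; simpl; intros H; [apply H; lia|].
  rewrite IH, H; auto; intros; apply H; lia.
Qed.
Definition unit_vec (j : nat) : nat -> R := fun i => if Nat.eqb i j then 1 else 0.

Definition nrm2 (m : nat) (g : nat -> R) : R := sumN m (fun i => g i ^ 2).

Lemma unit_vec_simplex m j : (j < m)%nat -> simplex m (unit_vec j).
Proof.
  intros Hj. unfold unit_vec. split; [|split].
  - intros i Hi. destruct (Nat.eqb_spec i j); [lia|reflexivity].
  - intros i _. destruct (Nat.eqb i j); lra.
  - rewrite (sumN_ext _ _ (fun i => (if Nat.eqb i j then 1 else 0) * 1)) by (intros; ring).
    rewrite sumN_indicator by exact Hj. ring.
Qed.

Lemma simplex_coord_bounds m w i : simplex m w -> 0 <= w i <= 1.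
Proof.
  intros [H0 [Hpos Hsum]]. destruct (Nat.lt_ge_cases i m).
  - split; [auto|]. rewrite <- Hsum. apply sumN_term_le; auto.
  - rewrite H0 by exact H. lra.
Qed.

Lemma simplex_dist2_le2 m w u : simplex m w -> simplex m u -> dist2 m w u <= 2.
Proof.
  intros Hw Hu. unfold dist2.
  apply Rle_trans with (sumN m (fun i => w i + u i)).
  - apply sumN_le. intros i _.
    pose proof (simplex_coord_bounds m w i Hw). pose proof (simplex_coord_bounds m u i Hu). nra.
  - rewrite sumN_plus. destruct Hw as [_ [_ ->]], Hu as [_ [_ ->]]. lra.
Qed.

Lemma simplex_segment m p u t : simplex m p -> simplex m u -> 0 <= t <= 1 ->
  simplex m (fun i => p i + t * (u i - p i)).
Proof.
  intros [Hp0 [Hp1 Hp2]] [Hu0 [Hu1 Hu2]] Ht. split; [|split].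
  - intros i Hi. rewrite Hp0, Hu0 by exact Hi. ring.
  - intros i Hi. specialize (Hp1 i Hi). specialize (Hu1 i Hi). nra.
  - rewrite sumN_plus, sumN_scal, sumN_minus, Hp2, Hu2. ring.
Qed.

Lemma simplex_proj_obtuse m proj v u : is_simplex_proj m proj -> simplex m u ->
  sumN m (fun i => (v i - proj v i) * (u i - proj v i)) <= 0.
Proof.
  intros Hp Hu. destruct (Hp v) as [Hs Hmin]. set (p := proj v) in *.
  set (X := sumN m (fun i => (v i - p i) * (u i - p i))).
  set (D := sumN m (fun i => (u i - p i) ^ 2)).
  assert (HD : 0 <= D) by (apply sumN_nonneg; intros; apply pow2_ge_0).
  assert (Hle : forall t, 0 < t <= 1 -> 2 * X <= t * D).
  { intros t Ht.
    pose proof (Hmin _ (simplex_segment m p u t Hs Hu ltac:(lra))) as H.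
    assert (Hexp : dist2 m v (fun i => p i + t * (u i - p i)) = dist2 m v p - 2 * t * X + t ^ 2 * D).
    { unfold dist2, X, D. rewrite <- !sumN_scal, <- sumN_minus, <- sumN_plus.
      apply sumN_ext. intros; ring. }
    rewrite Hexp in H. apply Rmult_le_reg_l with t; nra. }
  destruct (Rle_dec X 0) as [|HX]; [assumption|].
  (* take the step t = X / (X + D) to contradict [2 X <= t D] *)
  assert (Ht : 0 < X / (X + D) <= 1).
  { split; [apply Rdiv_lt_0_compat; lra|].
    apply Rmult_le_reg_r with (X + D); [lra|]. field_simplify; lra. }
  specialize (Hle _ Ht).
  assert (X / (X + D) * D <= X).
  { apply Rmult_le_reg_r with (X + D); [lra|]. field_simplify; nra. }
  lra.
Qed.

Lemma simplex_proj_dist2_le m proj v u : is_simplex_proj m proj -> simplex m u ->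
  dist2 m (proj v) u <= dist2 m v u.
Proof.
  intros Hp Hu. pose proof (simplex_proj_obtuse m proj v u Hp Hu) as Hobt.
  assert (H : dist2 m v u = dist2 m v (proj v) + dist2 m (proj v) u
               - 2 * sumN m (fun i => (v i - proj v i) * (u i - proj v i))).
  { unfold dist2. rewrite <- sumN_scal, <- sumN_plus, <- sumN_minus.
    apply sumN_ext. intros; ring. }
  assert (0 <= dist2 m v (proj v)) by (apply sumN_nonneg; intros; apply pow2_ge_0).
  lra.
Qed.

Lemma segmentation_mono n s t : segmentation n s t ->
  forall i j, (1 <= i)%nat -> (i <= j)%nat -> (j <= S s)%nat -> (t i <= t j)%nat.
Proof.
  intros [_ [_ [_ Hlt]]] i j Hi Hij. induction Hij as [|j Hij IH]; intros Hj; [lia|].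
  assert (t j < t (S j))%nat by (apply Hlt; lia). specialize (IH ltac:(lia)). lia.
Qed.

Lemma segmentation_bounds n s t i : segmentation n s t -> (i < s)%nat ->
  (1 <= t (S i) < t (S (S i)))%nat /\ (t (S (S i)) <= S n)%nat.
Proof.
  intros Hseg Hi. pose proof (segmentation_mono n s t Hseg) as Hmono.
  destruct Hseg as [_ [H1 [Hend Hlt]]].
  assert (t 1 <= t (S i))%nat by (apply Hmono; lia).
  assert (t (S (S i)) <= t (S s))%nat by (apply Hmono; lia).
  assert (t (S i) < t (S (S i)))%nat by (apply Hlt; lia).
  lia.
Qed.

Lemma sumN_segmentation n s t h : segmentation n s t ->
  sumN n h = sumN s (fun i => sumN (t (S (S i)) - t (S i)) (fun e => h (t (S i) - 1 + e)%nat)).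
Proof.
  intros Hseg.
  assert (Hprefix : forall j, (j <= s)%nat -> sumN (t (S j) - 1) h =
     sumN j (fun i => sumN (t (S (S i)) - t (S i)) (fun e => h (t (S i) - 1 + e)%nat))).
  { induction j as [|j IH]; intros Hj.
    - destruct Hseg as [_ [-> _]]. reflexivity.
    - simpl. rewrite <- IH by lia.
      destruct (segmentation_bounds n s t j Hseg ltac:(lia)) as [Hb _].
      replace (t (S (S j)) - 1)%nat with ((t (S j) - 1) + (t (S (S j)) - t (S j)))%nat by lia.
      apply sumN_add. }
  rewrite <- Hprefix by lia. destruct Hseg as [_ [_ [-> _]]]. f_equal. lia.
Qed.
Section OGD.
Variables (m n : nat) (mix : mixture)
  (G : (nat -> R) -> (nat -> nat -> R) -> nat -> nat -> R)
  (proj : (nat -> R) -> (nat -> R)) (w1 : nat -> R) (alpha : R)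
  (x : nat -> nat) (P : nat -> nat -> nat -> R).
Hypothesis Hm : (1 <= m)%nat.
Hypothesis Hproj : is_simplex_proj m proj.
Hypothesis Hw1 : simplex m w1.
Hypothesis Halpha : 0 < alpha.

Let W d := ogd_w mix G proj w1 alpha x P d.
Let f d v := codelen (x (S d)) (mix v (P (S d))).
Let g d v := G v (P (S d)) (x (S d)).

Hypothesis Hconvex : forall d w u, (d < n)%nat -> simplex m w -> simplex m u ->
  f d w + sumN m (fun i => g d w i * (u i - w i)) <= f d u.
Hypothesis Hvertex : forall d j, (d < n)%nat -> (j < m)%nat ->
  f d (unit_vec j) = codelen (x (S d)) (P (S d) j).

Lemma ogd_w_simplex d : simplex m (W d).
Proof. destruct d; simpl; [exact Hw1|apply Hproj]. Qed.

Lemma ogd_step d u : (d < n)%nat -> simplex m u ->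
  f d (W d) - f d u <=
  (dist2 m (W d) u - dist2 m (W (S d)) u) / (2 * alpha) + alpha / 2 * nrm2 m (g d (W d)).
Proof.
  intros Hd Hu. pose proof (Hconvex d (W d) u Hd (ogd_w_simplex d) Hu) as Hc.
  assert (Hp : dist2 m (W (S d)) u <= dist2 m (fun i => W d i - alpha * g d (W d) i) u)
    by (apply simplex_proj_dist2_le; assumption).
  assert (Hexp : dist2 m (fun i => W d i - alpha * g d (W d) i) u =
     dist2 m (W d) u + 2 * alpha * sumN m (fun i => g d (W d) i * (u i - W d i))
     + alpha ^ 2 * nrm2 m (g d (W d))).
  { unfold dist2, nrm2. rewrite <- !sumN_scal, <- !sumN_plus. apply sumN_ext. intros; ring. }
  apply Rmult_le_reg_l with (2 * alpha); [lra|].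
  replace (2 * alpha * ((dist2 m (W d) u - dist2 m (W (S d)) u) / (2 * alpha)
             + alpha / 2 * nrm2 m (g d (W d))))
    with (dist2 m (W d) u - dist2 m (W (S d)) u + alpha ^ 2 * nrm2 m (g d (W d)))
    by (field; lra).
  nra.
Qed.

Lemma ogd_telescope a len u : (a + len <= n)%nat -> simplex m u ->
  sumN len (fun e => f (a + e)%nat (W (a + e)%nat) - f (a + e)%nat u) <=
  (dist2 m (W a) u - dist2 m (W (a + len)%nat) u) / (2 * alpha) +
  alpha / 2 * sumN len (fun e => nrm2 m (g (a + e)%nat (W (a + e)%nat))).
Proof.
  intros Hlen Hu. induction len as [|len IH]; simpl.
  - rewrite Nat.add_0_r. unfold Rdiv. lra.
  - specialize (IH ltac:(lia)). pose proof (ogd_step (a + len) u ltac:(lia) Hu).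
    replace (a + S len)%nat with (S (a + len)) by lia.
    unfold Rdiv in *. lra.
Qed.

(* The initial squared distance to a vertex is at most [2], whence the [1 / alpha]. *)
Lemma ogd_segment_regret a len : (a + len <= n)%nat ->
  sumN len (fun e => f (a + e)%nat (W (a + e)%nat)) <=
  minN (m - 1) (fun j => sumN len (fun e => codelen (x (S (a + e))) (P (S (a + e)) j))) +
  (1 / alpha + alpha / 2 * sumN len (fun e => nrm2 m (g (a + e)%nat (W (a + e)%nat)))).
Proof.
  intros Hlen. apply le_minN_plus. intros j Hj.
  assert (Hjm : (j < m)%nat) by lia. pose proof (unit_vec_simplex m j Hjm) as Hej.
  pose proof (ogd_telescope a len (unit_vec j) Hlen Hej) as H.
  rewrite sumN_minus in H.
  rewrite (sumN_ext len (fun e => f (a + e)%nat (unit_vec j))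
             (fun e => codelen (x (S (a + e))) (P (S (a + e)) j))) in H
    by (intros; apply Hvertex; lia).
  pose proof (simplex_dist2_le2 m (W a) (unit_vec j) (ogd_w_simplex a) Hej).
  assert (0 <= dist2 m (W (a + len)) (unit_vec j))
    by (apply sumN_nonneg; intros; apply pow2_ge_0).
  assert ((dist2 m (W a) (unit_vec j) - dist2 m (W (a + len)) (unit_vec j)) / (2 * alpha)
          <= 1 / alpha).
  { apply Rmult_le_reg_l with (2 * alpha); [lra|]. field_simplify; lra. }
  lra.
Qed.

Lemma ogd_regret s t : segmentation n s t ->
  ogd_len mix G proj w1 alpha x P n <=
  seg_best m x P s t + INR s / alpha + alpha / 2 * sumN n (fun d => nrm2 m (g d (W d))).
Proof.
  intros Hseg.
  change (ogd_len mix G proj w1 alpha x P n) with (sumN n (fun d => f d (W d))).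
  rewrite (sumN_segmentation n s t _ Hseg),
    (sumN_segmentation n s t (fun d => nrm2 m (g d (W d))) Hseg).
  unfold seg_best. rewrite <- sumN_scal.
  replace (INR s / alpha) with (sumN s (fun _ => 1 / alpha)) by (rewrite sumN_const; field; lra).
  rewrite Rplus_assoc, <- !sumN_plus.
  apply sumN_le. intros i Hi.
  destruct (segmentation_bounds n s t i Hseg Hi) as [Hb Hend].
  eapply Rle_trans; [apply ogd_segment_regret; lia|].
  unfold lstar. right. f_equal. apply minN_ext. intros j _.
  replace (S (t (S (S i)) - 1) - t (S i))%nat with (t (S (S i)) - t (S i))%nat by lia.
  apply sumN_ext. intros e _.
  replace (S (t (S i) - 1 + e)) with (t (S i) + e)%nat by lia. reflexivity.
Qed.

Lemma ogd_regret_self_bounding s t :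
  (forall d w, (d < n)%nat -> simplex m w -> nrm2 m (g d w) <= / alpha * f d w) ->
  segmentation n s t ->
  ogd_len mix G proj w1 alpha x P n <= 2 * seg_best m x P s t + 2 * INR s / alpha.
Proof.
  intros Hself Hseg. pose proof (ogd_regret s t Hseg) as H.
  assert (Hsum : sumN n (fun d => nrm2 m (g d (W d))) <= / alpha * ogd_len mix G proj w1 alpha x P n).
  { unfold ogd_len. rewrite <- sumN_scal. apply sumN_le. intros d Hd.
    apply Hself; [exact Hd|apply ogd_w_simplex]. }
  assert (alpha / 2 * sumN n (fun d => nrm2 m (g d (W d)))
          <= ogd_len mix G proj w1 alpha x P n / 2).
  { apply Rle_trans with (alpha / 2 * (/ alpha * ogd_len mix G proj w1 alpha x P n)).
    - apply Rmult_le_compat_l; lra.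
    - right. field. lra. }
  unfold Rdiv in *. lra.
Qed.

Lemma ogd_regret_bounded_grad Gamma s t :
  (forall d w, (d < n)%nat -> simplex m w -> nrm2 m (g d w) <= Gamma) ->
  segmentation n s t ->
  ogd_len mix G proj w1 alpha x P n <= seg_best m x P s t + INR s / alpha + alpha / 2 * (INR n * Gamma).
Proof.
  intros Hbound Hseg. eapply Rle_trans; [apply (ogd_regret s t Hseg)|].
  apply Rplus_le_compat_l, Rmult_le_compat_l; [lra|].
  rewrite <- sumN_const. apply sumN_le. intros d Hd. apply Hbound; [exact Hd|apply ogd_w_simplex].
Qed.
End OGD.

Lemma exp_neg_alt_bounds (a : R) (k : nat) : 0 <= a <= 1 ->
  sum_f_R0 (tg_alt (fun i => a ^ i / INR (fact i))) (S (2 * k)) <= exp (- a) <=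
  sum_f_R0 (tg_alt (fun i => a ^ i / INR (fact i))) (2 * k).
Proof.
  intros Ha. unfold exp; destruct (exist_exp (- a)) as [l Hl]; simpl.
  apply alternated_series_ineq.
  - intro i. unfold Rdiv.
    rewrite fact_simpl, mult_INR, Rinv_mult, <- tech_pow_Rmult.
    assert (0 < INR (fact i)) by apply INR_fact_lt_0.
    assert (0 <= a ^ i) by (apply pow_le; lra).
    assert (1 <= INR (S i)) by (rewrite S_INR; pose proof (pos_INR i); lra).
    assert (0 < / INR (S i) <= 1).
    { split; [apply Rinv_0_lt_compat; lra|]. rewrite <- Rinv_1. apply Rinv_le_contravar; lra. }
    assert (0 < / INR (fact i)) by (apply Rinv_0_lt_compat; lra).
    replace (a * a ^ i * (/ INR (S i) * / INR (fact i)))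
      with ((a * / INR (S i)) * (a ^ i * / INR (fact i))) by ring.
    rewrite <- (Rmult_1_l (a ^ i * / INR (fact i))) at 2.
    apply Rmult_le_compat_r; [apply Rmult_le_pos; lra|].
    replace 1 with (1 * 1) by ring. apply Rmult_le_compat; lra.
  - apply cv_speed_pow_fact.
  - intros e He. destruct (Hl e He) as [N0 HN0]. exists N0. intros i Hi.
    replace (sum_f_R0 (tg_alt (fun i => a ^ i / INR (fact i))) i)
      with (sum_f_R0 (fun i => / INR (fact i) * (- a) ^ i) i) by
      (apply sum_eq; intros j _; unfold tg_alt;
       replace (- a) with ((-1) * a) by ring; rewrite Rpow_mult_distr; unfold Rdiv; ring).
    apply HN0; exact Hi.
Qed.

Lemma ln2_gt : 0.69 < ln 2.
Proof.
  set (a := 0.69). destruct (exp_neg_alt_bounds a 2) as [H _]; [unfold a; lra|].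
  simpl in H. unfold tg_alt in H. simpl in H.
  assert (Hexp : 0.5 < exp (- a)) by (eapply Rlt_le_trans; [|exact H]; unfold a; field_simplify; lra).
  apply ln_increasing in Hexp; [|lra]. replace 0.5 with (/ 2) in Hexp by lra.
  rewrite ln_Rinv, ln_exp in Hexp by lra. lra.
Qed.

Lemma ln2_lt : ln 2 < 0.7.
Proof.
  set (a := 0.7). destruct (exp_neg_alt_bounds a 2) as [_ H]; [unfold a; lra|].
  simpl in H. unfold tg_alt in H. simpl in H.
  assert (Hexp : exp (- a) < 0.5) by (eapply Rle_lt_trans; [exact H|]; unfold a; field_simplify; lra).
  apply ln_increasing in Hexp; [|apply exp_pos]. replace 0.5 with (/ 2) in Hexp by lra.
  rewrite ln_Rinv, ln_exp in Hexp by lra. lra.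
Qed.

Lemma ln_le_sub1 z : 0 < z -> ln z <= z - 1.
Proof. intros Hz. pose proof (exp_ineq1_le (ln z)). rewrite exp_ln in H by exact Hz. lra. Qed.

(* [geo] is the Gibbs distribution with log-weights [geo_score], normalizer [geo_norm]. *)
Definition geo_score (m : nat) (P : nat -> nat -> R) (w : nat -> R) (y : nat) : R :=
  sumN m (fun i => w i * ln (P i y)).

Definition geo_norm (N m : nat) (P : nat -> nat -> R) (w : nat -> R) : R :=
  sumN N (fun z => exp (geo_score m P w z)).

Definition geo_expect (N m : nat) (P : nat -> nat -> R) (w : nat -> R) (h : nat -> R) : R :=
  sumN N (fun z => h z * exp (geo_score m P w z)) / geo_norm N m P w.

Section Mixtures.
Variables (N m : nat) (eps : R).
Hypothesis HN : (1 < N)%nat.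
Hypothesis Heps : 0 < eps.

(* Since [N > 1], some other letter also has probability at least [eps]. *)
Lemma prob_matrix_entry_bounds P i y : prob_matrix N m eps P -> (i < m)%nat -> (y < N)%nat ->
  eps <= P i y <= 1 - eps.
Proof.
  intros HP Hi Hy. destruct (HP i Hi) as [Hlow Hsum]. split; [auto|].
  set (y' := if Nat.eqb y 0 then 1%nat else 0%nat).
  assert (Hy' : (y' < N)%nat /\ y' <> y) by (unfold y'; destruct (Nat.eqb_spec y 0); lia).
  destruct Hy' as [Hy1 Hy2].
  pose proof (sumN_two_terms_le N (P i) y y'
    ltac:(intros z Hz; specialize (Hlow z Hz); lra) Hy Hy1 ltac:(auto)).
  specialize (Hlow y' Hy1). lra.
Qed.

Lemma lin_shift w P y i t : (i < m)%nat -> lin m (shift w i t) P y = lin m w P y + t * P i y.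
Proof.
  intros Hi. unfold lin, shift.
  rewrite <- (sumN_indicator m i t (fun j => P j y)), <- sumN_plus by exact Hi.
  apply sumN_ext. intros j _. destruct (Nat.eqb j i); ring.
Qed.

Lemma lin_unit_vec P j y : (j < m)%nat -> lin m (unit_vec j) P y = P j y.
Proof. intros Hj. unfold lin, unit_vec. rewrite sumN_indicator by exact Hj. ring. Qed.

Lemma lin_bounds P w y : prob_matrix N m eps P -> simplex m w -> (y < N)%nat ->
  eps <= lin m w P y <= 1 - eps.
Proof.
  intros HP Hw Hy. destruct Hw as [_ [Hw Hsum]]. unfold lin.
  assert (Hmix : forall c, sumN m (fun i => w i * c) = c)
    by (intro c; rewrite (sumN_ext m _ (fun i => c * w i)), sumN_scal, Hsum by (intros; ring); ring).
  split; [rewrite <- (Hmix eps) | rewrite <- (Hmix (1 - eps))]; apply sumN_le; intros i Hi;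
    pose proof (prob_matrix_entry_bounds P i y HP Hi Hy); specialize (Hw i Hi); nra.
Qed.

Lemma lin_grad G P w y i : is_grad N m eps (lin m) G ->
  prob_matrix N m eps P -> simplex m w -> (y < N)%nat -> (i < m)%nat ->
  G w P y i = - P i y / (lin m w P y * ln 2).
Proof.
  intros HG HP Hw Hy Hi. pose proof (lin_bounds P w y HP Hw Hy) as Hq.
  pose proof ln2_gt.
  rewrite <- (is_derive_unique _ _ _ (HG w P y i Hw HP Hy Hi)). apply is_derive_unique.
  apply is_derive_ext with (fun t => - (ln (lin m w P y + t * P i y) / ln 2)).
  - intro t. unfold codelen, log2. rewrite lin_shift by exact Hi. reflexivity.
  - auto_derive; [lra|]. field. split; lra.
Qed.

Lemma lin_codelen_tangent_le G P w u y : is_grad N m eps (lin m) G ->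
  prob_matrix N m eps P -> simplex m w -> simplex m u -> (y < N)%nat ->
  codelen y (lin m w P) + sumN m (fun i => G w P y i * (u i - w i)) <= codelen y (lin m u P).
Proof.
  intros HG HP Hw Hu Hy.
  pose proof (lin_bounds P w y HP Hw Hy) as Hq. pose proof (lin_bounds P u y HP Hu Hy) as Hr.
  pose proof ln2_gt.
  rewrite (sumN_ext m _ (fun i => (- / (lin m w P y * ln 2)) * (u i * P i y - w i * P i y))).
  2: { intros i Hi. rewrite (lin_grad G P w y i) by assumption. field. split; lra. }
  rewrite sumN_scal, sumN_minus. fold (lin m u P y) (lin m w P y).
  unfold codelen, log2. set (q := lin m w P y) in *. set (r := lin m u P y) in *.
  pose proof (ln_le_sub1 (r / q) ltac:(apply Rdiv_lt_0_compat; lra)) as Hln.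
  rewrite ln_div in Hln by lra.
  apply Rmult_le_reg_l with (ln 2); [lra|].
  replace (ln 2 * (- (ln q / ln 2) + - / (q * ln 2) * (r - q))) with (- ln q - (r - q) / q)
    by (field; lra).
  replace (ln 2 * - (ln r / ln 2)) with (- ln r) by (field; lra).
  replace (r / q - 1) with ((r - q) / q) in Hln by (field; lra).
  lra.
Qed.

Lemma lin_nrm2_le G P w y : is_grad N m eps (lin m) G ->
  prob_matrix N m eps P -> simplex m w -> (y < N)%nat ->
  nrm2 m (G w P y) <= INR m * ((1 - eps) / (lin m w P y * ln 2)) ^ 2.
Proof.
  intros HG HP Hw Hy. unfold nrm2. rewrite <- sumN_const. apply sumN_le. intros i Hi.
  rewrite (lin_grad G P w y i) by assumption.
  pose proof (lin_bounds P w y HP Hw Hy). pose proof (prob_matrix_entry_bounds P i y HP Hi Hy).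
  pose proof ln2_gt.
  assert (Hpos : 0 < lin m w P y * ln 2) by nra.
  apply pow_maj_Rabs. rewrite Rabs_div, Rabs_Ropp, Rabs_right, Rabs_right by lra.
  unfold Rdiv. apply Rmult_le_compat_r; [left; apply Rinv_0_lt_compat|]; lra.
Qed.


Lemma geo_norm_pos P w : 0 < geo_norm N m P w.
Proof. apply sumN_pos; [lia|]. intros; apply exp_pos. Qed.

Lemma geo_expect_ext P w h h' : (forall z, h z = h' z) -> geo_expect N m P w h = geo_expect N m P w h'.
Proof. intros H. unfold geo_expect. f_equal. apply sumN_ext. intros. rewrite H. reflexivity. Qed.

Lemma geo_exp_score w P y : geo N m w P y = exp (geo_score m P w y) / geo_norm N m P w.
Proof.
  assert (Hprod : forall z, prodN m (fun i => Rpower (P i z) (w i)) = exp (geo_score m P w z)).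
  { intro z. unfold geo_score. induction m as [|k IH]; simpl; [now rewrite exp_0|].
    rewrite IH, exp_plus. reflexivity. }
  unfold geo, geo_norm. rewrite Hprod. f_equal. apply sumN_ext. intros; apply Hprod.
Qed.

Lemma geo_bounds w P y : (y < N)%nat -> 0 < geo N m w P y <= 1.
Proof.
  intros Hy. rewrite geo_exp_score. pose proof (geo_norm_pos P w). split.
  - apply Rdiv_lt_0_compat; [apply exp_pos|lra].
  - apply Rmult_le_reg_r with (geo_norm N m P w); [lra|].
    field_simplify; [|lra]. unfold geo_norm.
    apply (sumN_term_le N (fun z => exp (geo_score m P w z))); [intros; left; apply exp_pos|exact Hy].
Qed.

Lemma codelen_geo w P y :
  codelen y (geo N m w P) = - (geo_score m P w y - ln (geo_norm N m P w)) / ln 2.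
Proof.
  unfold codelen, log2. rewrite geo_exp_score, ln_div, ln_exp; [unfold Rdiv; ring|apply exp_pos|].
  apply geo_norm_pos.
Qed.

Lemma geo_score_shift P w y i t : (i < m)%nat ->
  geo_score m P (shift w i t) y = geo_score m P w y + t * ln (P i y).
Proof.
  intros Hi. unfold geo_score, shift.
  rewrite <- (sumN_indicator m i t (fun j => ln (P j y))), <- sumN_plus by exact Hi.
  apply sumN_ext. intros j _. destruct (Nat.eqb j i); ring.
Qed.

Lemma geo_unit_vec P j y : prob_matrix N m eps P -> (j < m)%nat -> (y < N)%nat ->
  geo N m (unit_vec j) P y = P j y.
Proof.
  intros HP Hj Hy. rewrite geo_exp_score.
  assert (Hexp : forall z, (z < N)%nat -> exp (geo_score m P (unit_vec j) z) = P j z).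
  { intros z Hz. unfold geo_score, unit_vec. rewrite sumN_indicator, Rmult_1_l by exact Hj.
    apply exp_ln. pose proof (prob_matrix_entry_bounds P j z HP Hj Hz). lra. }
  unfold geo_norm. rewrite Hexp, (sumN_ext N _ (P j)) by assumption.
  destruct (HP j Hj) as [_ ->]. field.
Qed.

(* The derivative of [ln geo_norm] in direction [e_i] is the [geo]-mean of [ln p_i]. *)
Lemma geo_grad G P w y i : is_grad N m eps (geo N m) G ->
  prob_matrix N m eps P -> simplex m w -> (y < N)%nat -> (i < m)%nat ->
  G w P y i = - (ln (P i y) - geo_expect N m P w (fun z => ln (P i z))) / ln 2.
Proof.
  intros HG HP Hw Hy Hi. pose proof ln2_gt.
  set (Z := fun t => sumN N (fun z => exp (geo_score m P w z + t * ln (P i z)))).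
  set (dZ := sumN N (fun z => ln (P i z) * exp (geo_score m P w z))).
  assert (HZ : is_derive Z 0 dZ).
  { apply is_derive_sumN. intros k _. auto_derive; [exact I|]. rewrite Rmult_0_l, Rplus_0_r. ring. }
  assert (HZ0 : Z 0 = geo_norm N m P w).
  { unfold Z, geo_norm. apply sumN_ext. intros. rewrite Rmult_0_l, Rplus_0_r. reflexivity. }
  pose proof (geo_norm_pos P w).
  rewrite <- (is_derive_unique _ _ _ (HG w P y i Hw HP Hy Hi)). apply is_derive_unique.
  apply is_derive_ext with (fun t => - ((geo_score m P w y + t * ln (P i y)) - ln (Z t)) / ln 2).
  - intro t. rewrite codelen_geo, geo_score_shift by exact Hi. unfold Z, geo_norm.
    do 4 f_equal. apply sumN_ext. intros. rewrite geo_score_shift by exact Hi. reflexivity.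
  - auto_derive.
    + split; [exists dZ; exact HZ|]. split; [lra|exact I].
    + replace (Derive (fun t => Z t) 0) with dZ by (symmetry; apply is_derive_unique; exact HZ).
      unfold geo_expect. fold dZ. rewrite <- HZ0.
      field. split; lra.
Qed.

Lemma geo_expect_sumN P w (c : nat -> R) (h : nat -> nat -> R) :
  geo_expect N m P w (fun z => sumN m (fun i => c i * h i z)) =
  sumN m (fun i => c i * geo_expect N m P w (h i)).
Proof.
  pose proof (geo_norm_pos P w). unfold geo_expect.
  transitivity (/ geo_norm N m P w *
    sumN m (fun i => sumN N (fun z => c i * h i z * exp (geo_score m P w z)))).
  - rewrite <- sumN_swap. unfold Rdiv. rewrite Rmult_comm. f_equal. apply sumN_ext. intros.
    rewrite Rmult_comm, <- sumN_scal. apply sumN_ext. intros; ring.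
  - rewrite <- sumN_scal. apply sumN_ext. intros.
    rewrite (sumN_ext N _ (fun z => c i * (h i z * exp (geo_score m P w z)))) by (intros; ring).
    rewrite sumN_scal. field. lra.
Qed.

Lemma geo_grad_inner G P w u y : is_grad N m eps (geo N m) G ->
  prob_matrix N m eps P -> simplex m w -> (y < N)%nat ->
  let D z := geo_score m P u z - geo_score m P w z in
  sumN m (fun i => G w P y i * (u i - w i)) = - (D y - geo_expect N m P w D) / ln 2.
Proof.
  intros HG HP Hw Hy D. pose proof ln2_gt.
  assert (HD : forall z, D z = sumN m (fun i => (u i - w i) * ln (P i z))).
  { intro z. unfold D, geo_score. rewrite <- sumN_minus. apply sumN_ext. intros; ring. }
  rewrite (geo_expect_ext P w D _ HD), geo_expect_sumN, HD.
  rewrite <- sumN_minus, (sumN_ext m _ (fun i => - / ln 2 * ((u i - w i) * ln (P i y)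
    - (u i - w i) * geo_expect N m P w (fun z => ln (P i z))))).
  - rewrite sumN_scal. field. lra.
  - intros i Hi. rewrite (geo_grad G P w y i) by assumption. field. lra.
Qed.

Lemma exp_tangent_le d M : exp M * (1 + d - M) <= exp d.
Proof.
  pose proof (exp_ineq1_le (d - M)).
  replace (exp d) with (exp M * exp (d - M)) by (rewrite <- exp_plus; f_equal; ring).
  apply Rmult_le_compat_l; [left; apply exp_pos|lra].
Qed.

(* Convexity of log-sum-exp: tangent at [exp M] with [M] the [geo]-mean of the score gap. *)
Lemma ln_geo_norm_tangent_le P w u :
  let D z := geo_score m P u z - geo_score m P w z in
  ln (geo_norm N m P w) + geo_expect N m P w D <= ln (geo_norm N m P u).
Proof.
  intros D. set (Zw := geo_norm N m P w). set (M := geo_expect N m P w D).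
  pose proof (geo_norm_pos P w) as HZw. pose proof (geo_norm_pos P u) as HZu. fold Zw in HZw.
  assert (HZ : exp M * Zw <= geo_norm N m P u).
  { apply Rle_trans with (sumN N (fun z => exp (geo_score m P w z) * (exp M * (1 + D z - M)))).
    - assert (HM : sumN N (fun z => D z * exp (geo_score m P w z)) = M * Zw)
        by (unfold M, geo_expect; fold Zw; field; lra).
      right. rewrite (sumN_ext N _ (fun z => exp M * exp (geo_score m P w z)
                + exp M * (D z * exp (geo_score m P w z)) - exp M * M * exp (geo_score m P w z)))
        by (intros; ring).
      rewrite sumN_minus, sumN_plus, !sumN_scal, HM. unfold Zw, geo_norm. ring.
    - apply sumN_le. intros z _. replace (geo_score m P u z) with (geo_score m P w z + D z)
        by (unfold D; ring).
      rewrite exp_plus. apply Rmult_le_compat_l; [left; apply exp_pos|apply exp_tangent_le]. }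
  rewrite <- (ln_exp M), Rplus_comm, <- ln_mult by (try apply exp_pos; lra).
  apply ln_le; [apply Rmult_lt_0_compat; [apply exp_pos|lra]|exact HZ].
Qed.

Lemma geo_codelen_tangent_le G P w u y : is_grad N m eps (geo N m) G ->
  prob_matrix N m eps P -> simplex m w -> (y < N)%nat ->
  codelen y (geo N m w P) + sumN m (fun i => G w P y i * (u i - w i)) <= codelen y (geo N m u P).
Proof.
  intros HG HP Hw Hy. rewrite (geo_grad_inner G P w u y HG HP Hw Hy), !codelen_geo.
  pose proof (ln_geo_norm_tangent_le P w u) as H. pose proof ln2_gt.
  apply Rmult_le_reg_l with (ln 2); [lra|]. field_simplify; lra.
Qed.

Lemma geo_expect_dev_le P w h y c : (y < N)%nat ->
  (forall z, (z < N)%nat -> Rabs (h y - h z) <= c) ->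
  Rabs (h y - geo_expect N m P w h) <= (1 - geo N m w P y) * c.
Proof.
  intros Hy Hc. pose proof (geo_norm_pos P w) as HZ. set (Z := geo_norm N m P w) in *.
  set (e z := exp (geo_score m P w z)).
  assert (He : forall z, 0 < e z) by (intro; apply exp_pos).
  assert (Hdev : h y - geo_expect N m P w h = sumN N (fun z => e z * (h y - h z)) / Z).
  { unfold geo_expect. fold Z.
    rewrite (sumN_ext N (fun z => e z * (h y - h z)) (fun z => h y * e z - h z * e z)) by (intros; ring).
    rewrite sumN_minus, sumN_scal. unfold Z, geo_norm, e. field. exact (Rgt_not_eq _ _ HZ). }
  assert (Hsum : sumN N (fun z => Rabs (e z * (h y - h z))) <= (Z - e y) * c).
  { replace ((Z - e y) * c)
      with (sumN N (fun z => (e z - (if Nat.eqb z y then e y else 0) * 1) * c)).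
    2: { rewrite (sumN_ext N _ (fun z => c * (e z - (if Nat.eqb z y then e y else 0) * 1)))
           by (intros; ring).
         rewrite sumN_scal, sumN_minus, sumN_indicator by exact Hy. unfold Z, geo_norm, e. ring. }
    apply sumN_le. intros z Hz. specialize (Hc z Hz). specialize (He z).
    destruct (Nat.eqb_spec z y) as [->|_].
    - rewrite Rminus_diag, Rmult_0_r, Rabs_R0. lra.
    - rewrite Rabs_mult, Rabs_right by lra. nra. }
  rewrite Hdev, geo_exp_score. fold Z. unfold Rdiv.
  rewrite Rabs_mult, (Rabs_right (/ Z)) by (left; apply Rinv_0_lt_compat; lra).
  apply Rmult_le_reg_r with Z; [lra|].
  rewrite Rmult_assoc, Rinv_l, Rmult_1_r by lra.
  replace ((1 - exp (geo_score m P w y) * / Z) * c * Z) with ((Z - e y) * c) by (unfold e; field; lra).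
  eapply Rle_trans; [apply Rabs_sumN|exact Hsum].
Qed.

Lemma geo_nrm2_le G P w y : is_grad N m eps (geo N m) G ->
  prob_matrix N m eps P -> simplex m w -> (y < N)%nat ->
  nrm2 m (G w P y) <= INR m * ((1 - geo N m w P y) * (- ln eps) / ln 2) ^ 2.
Proof.
  intros HG HP Hw Hy. unfold nrm2. rewrite <- sumN_const. apply sumN_le. intros i Hi.
  rewrite (geo_grad G P w y i) by assumption. pose proof ln2_gt.
  assert (Hln : forall z, (z < N)%nat -> ln eps <= ln (P i z) <= 0).
  { intros z Hz. pose proof (prob_matrix_entry_bounds P i z HP Hi Hz).
    rewrite <- ln_1. split; apply ln_le; lra. }
  assert (Hdev := geo_expect_dev_le P w (fun z => ln (P i z)) y (- ln eps) Hy).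
  assert (Hrange : forall z, (z < N)%nat -> Rabs (ln (P i y) - ln (P i z)) <= - ln eps)
    by (intros z Hz; pose proof (Hln y Hy); pose proof (Hln z Hz); apply Rabs_le; lra).
  specialize (Hdev Hrange).
  pose proof (geo_bounds w P y Hy). pose proof (Hln 0%nat ltac:(lia)).
  apply pow_maj_Rabs. rewrite Rabs_div, Rabs_Ropp, (Rabs_right (ln 2)) by lra.
  unfold Rdiv. apply Rmult_le_compat_r; [left; apply Rinv_0_lt_compat; lra|].
  exact Hdev.
Qed.

End Mixtures.

Lemma mul_exp_m2_decreasing a b : 1 / 2 <= a -> a <= b -> exp (-2 * b) * b <= exp (-2 * a) * a.
Proof.
  intros Ha Hab. set (r := b - a).
  replace (exp (-2 * a)) with (exp (-2 * b) * exp (2 * r))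
    by (rewrite <- exp_plus; f_equal; unfold r; ring).
  pose proof (exp_ineq1_le (2 * r)). pose proof (exp_pos (-2 * b)).
  rewrite Rmult_assoc. apply Rmult_le_compat_l; [lra|].
  replace b with (a + r) at 1 by (unfold r; ring).
  assert (0 <= (exp (2 * r) - 1 - 2 * r) * a) by (apply Rmult_le_pos; unfold r in *; lra).
  assert (0 <= r * (2 * a - 1)) by (apply Rmult_le_pos; unfold r; lra).
  nra.
Qed.

Lemma mul_exp_m2_increasing a b : 0 <= a -> a <= b -> b <= 1 / 2 -> exp (-2 * a) * a <= exp (-2 * b) * b.
Proof.
  intros Ha Hab Hb. set (r := b - a).
  replace (exp (-2 * a)) with (exp (-2 * b) * exp (2 * r))
    by (rewrite <- exp_plus; f_equal; unfold r; ring).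
  pose proof (exp_ineq1_le (-2 * r)). pose proof (exp_ineq1_le (2 * r)).
  pose proof (exp_pos (-2 * b)). pose proof (exp_pos (2 * r)).
  assert (exp (2 * r) * exp (-2 * r) = 1)
    by (rewrite <- exp_plus; replace (2 * r + -2 * r) with 0 by ring; apply exp_0).
  assert (exp (2 * r) * (1 - 2 * r) <= 1) by nra.
  assert (0 <= (exp (2 * r) - 1) * (1 / 2 - r - a)) by (apply Rmult_le_pos; unfold r in *; lra).
  assert ((exp (2 * r) - 1) * a <= r) by nra.
  rewrite Rmult_assoc. apply Rmult_le_compat_l; [lra|].
  replace b with (a + r) by (unfold r; ring). nra.
Qed.

Lemma ln_Rpower2 B : ln (Rpower 2 B) = B * ln 2.
Proof. unfold Rpower. apply ln_exp. Qed.

Lemma Rpower2_ge_1_plus B : 1 + B * ln 2 <= Rpower 2 B.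
Proof. apply exp_ineq1_le. Qed.

(* [q^2 (-ln q) = a exp(-2a)] for [a = -ln q] is smallest at an end of [eps, 1 - eps]. *)
Lemma lin_self_bounding_ineq B q : 1 <= B -> / Rpower 2 B <= q <= 1 - / Rpower 2 B ->
  8 * B * (1 - / Rpower 2 B) ^ 2 <= 17 * ln 2 * Rpower 2 B ^ 2 * (q ^ 2 * - ln q).
Proof.
  intros HB Hq. set (E := Rpower 2 B) in *. set (eps := / E) in *.
  pose proof ln2_gt. pose proof (Rpower2_ge_1_plus B) as HE1. fold E in HE1.
  assert (HEe : E * eps = 1) by (unfold eps; field; nra).
  assert (Heps : 0 < eps) by (unfold eps; apply Rinv_0_lt_compat; nra).
  assert (Hln : - ln eps = B * ln 2)
    by (unfold eps, E; rewrite ln_Rinv, ln_Rpower2 by apply exp_pos; ring).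
  assert (Hsq : forall r, 0 < r -> exp (-2 * (- ln r)) * (- ln r) = r ^ 2 * - ln r).
  { intros r Hr. replace (-2 * - ln r) with (ln r + ln r) by ring.
    rewrite exp_plus, exp_ln by exact Hr. ring. }
  assert (Hq_ln : - ln q <= B * ln 2)
    by (rewrite <- Hln; assert (ln eps <= ln q) by (apply ln_le; lra); lra).
  assert (Hpos : 0 <= 17 * ln 2 * E ^ 2) by (apply Rmult_le_pos; [lra|apply pow2_ge_0]).
  destruct (Rle_dec (1 / 2) (- ln q)) as [Hbig|Hsmall].
  - (* comparison with the endpoint q = eps *)
    pose proof (mul_exp_m2_decreasing _ _ Hbig Hq_ln) as Hphi.
    rewrite <- Hln, !Hsq in Hphi by lra.
    apply Rle_trans with (17 * ln 2 * E ^ 2 * (eps ^ 2 * - ln eps)); [|apply Rmult_le_compat_l; lra].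
    replace (17 * ln 2 * E ^ 2 * (eps ^ 2 * - ln eps))
      with (17 * ln 2 * (E * eps) ^ 2 * - ln eps) by ring.
    rewrite HEe, Hln. assert ((1 - eps) ^ 2 <= 1) by nra. nra.
  - (* comparison with the endpoint q = 1 - eps *)
    set (b := 1 - eps).
    assert (Hb_ln : 0 <= - ln b)
      by (assert (ln b <= ln 1) by (apply ln_le; unfold b; lra); rewrite ln_1 in *; lra).
    assert (Hbq : - ln b <= - ln q) by (assert (ln q <= ln b) by (apply ln_le; unfold b; lra); lra).
    pose proof (mul_exp_m2_increasing _ _ Hb_ln Hbq ltac:(lra)) as Hphi.
    rewrite !Hsq in Hphi by (unfold b; lra).
    assert (eps <= - ln b) by (pose proof (ln_le_sub1 b ltac:(unfold b; lra)); unfold b in *; lra).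
    apply Rle_trans with (17 * ln 2 * E ^ 2 * (b ^ 2 * eps)).
    + replace (17 * ln 2 * E ^ 2 * (b ^ 2 * eps)) with (17 * ln 2 * E * b ^ 2 * (E * eps)) by ring.
      rewrite HEe. assert (8 * B <= 17 * ln 2 * E) by nra.
      assert (0 <= b ^ 2) by apply pow2_ge_0. nra.
    + apply Rmult_le_compat_l; [lra|]. assert (0 <= b ^ 2) by apply pow2_ge_0. nra.
Qed.

Lemma Rpower4_Rpower2_sqr B : Rpower 4 B = Rpower 2 B ^ 2.
Proof.
  unfold Rpower. replace 4 with (2 * 2) by ring.
  rewrite ln_mult by lra. simpl. rewrite Rmult_1_r, <- exp_plus. f_equal. ring.
Qed.

Lemma lin_sqrt_rate_ineq B k : 1 <= B -> 1 <= k ->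
  32 * B ^ 2 <= 53 * 17 * ln 2 ^ 2 * k * Rpower 2 B ^ 2.
Proof.
  intros HB Hk. pose proof ln2_gt. pose proof (Rpower2_ge_1_plus B) as HE.
  set (E := Rpower 2 B) in *.
  assert (Hln4 : 0.2 <= ln 2 ^ 2 * ln 2 ^ 2) by (assert (0.47 <= ln 2 ^ 2) by (simpl; nra); nra).
  assert (B ^ 2 * ln 2 ^ 2 <= E ^ 2) by (rewrite <- Rpow_mult_distr; apply pow_incr; nra).
  assert (0.2 * B ^ 2 <= ln 2 ^ 2 * E ^ 2).
  { apply Rle_trans with (ln 2 ^ 2 * (B ^ 2 * ln 2 ^ 2)).
    - replace (ln 2 ^ 2 * (B ^ 2 * ln 2 ^ 2)) with (ln 2 ^ 2 * ln 2 ^ 2 * B ^ 2) by ring.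
      apply Rmult_le_compat_r; [apply pow2_ge_0|lra].
    - apply Rmult_le_compat_l; [apply pow2_ge_0|lra]. }
  assert (0 <= B ^ 2) by apply pow2_ge_0. nra.
Qed.

Section Rates.
Variables (N m : nat) (B : R).
Hypothesis HN : (1 < N)%nat.
Hypothesis Hm : (1 < m)%nat.
Hypothesis HB : 1 <= B.

Let eps_eq : Rpower 2 (- B) = / Rpower 2 B.
Proof. apply Rpower_Ropp. Qed.

Let eps_pos : 0 < Rpower 2 (- B).
Proof. apply exp_pos. Qed.

Let ln_eps : - ln (Rpower 2 (- B)) = B * ln 2.
Proof. rewrite ln_Rpower2. ring. Qed.

Lemma lin_nrm2_self_bounding G P w y : is_grad N m (Rpower 2 (- B)) (lin m) G ->
  prob_matrix N m (Rpower 2 (- B)) P -> simplex m w -> (y < N)%nat ->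
  nrm2 m (G w P y) <= / (8 * B / (17 * INR m * Rpower 4 B)) * codelen y (lin m w P).
Proof.
  intros HG HP Hw Hy. eapply Rle_trans; [apply (lin_nrm2_le N m _ HN eps_pos); assumption|].
  pose proof (lin_bounds N m _ HN eps_pos P w y HP Hw Hy) as Hq. rewrite eps_eq in *.
  set (q := lin m w P y) in *. set (E := Rpower 2 B) in *.
  pose proof (lin_self_bounding_ineq B q HB Hq) as Hcore. fold E in Hcore.
  pose proof ln2_gt. pose proof (Rpower2_ge_1_plus B). fold E in H0.
  assert (Hm0 : 0 < INR m) by (apply lt_0_INR; lia).
  assert (Hq0 : 0 < q) by (assert (0 < / E) by (apply Rinv_0_lt_compat; nra); lra).
  set (c := INR m / (8 * B * q ^ 2 * ln 2 ^ 2)).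
  assert (Hc : 0 < c)
    by (unfold c; apply Rdiv_lt_0_compat; [lra|];
        repeat apply Rmult_lt_0_compat; try lra; apply pow_lt; lra).
  rewrite Rpower4_Rpower2_sqr. fold E. unfold codelen, log2. fold q.
  replace (INR m * ((1 - / E) / (q * ln 2)) ^ 2) with (c * (8 * B * (1 - / E) ^ 2))
    by (unfold c; field; repeat split; try lra; try (apply pow_nonzero; lra); nra).
  replace (/ (8 * B / (17 * INR m * E ^ 2)) * - (ln q / ln 2))
    with (c * (17 * ln 2 * E ^ 2 * (q ^ 2 * - ln q))) by (unfold c; field; repeat split; nra).
  apply Rmult_le_compat_l; lra.
Qed.

Lemma lin_nrm2_bounded G P w y : is_grad N m (Rpower 2 (- B)) (lin m) G ->
  prob_matrix N m (Rpower 2 (- B)) P -> simplex m w -> (y < N)%nat ->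
  nrm2 m (G w P y) <= INR m * (Rpower 2 B / ln 2) ^ 2.
Proof.
  intros HG HP Hw Hy. eapply Rle_trans; [apply (lin_nrm2_le N m _ HN eps_pos); assumption|].
  pose proof (lin_bounds N m _ HN eps_pos P w y HP Hw Hy) as Hq. rewrite eps_eq in *.
  set (q := lin m w P y) in *. set (E := Rpower 2 B) in *.
  pose proof ln2_gt. pose proof (Rpower2_ge_1_plus B). fold E in H0.
  assert (Hm0 : 0 < INR m) by (apply lt_0_INR; lia).
  assert (HEi : 0 < / E) by (apply Rinv_0_lt_compat; nra).
  apply Rmult_le_compat_l; [lra|]. apply pow_incr. split.
  - apply Rdiv_le_0_compat; [lra|]. apply Rmult_lt_0_compat; lra.
  - assert (Hinvq : / q <= E) by (rewrite <- (Rinv_inv E); apply Rinv_le_contravar; lra).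
    assert (Hinv2 : 0 < / ln 2) by (apply Rinv_0_lt_compat; lra).
    assert (0 < / q) by (apply Rinv_0_lt_compat; lra).
    unfold Rdiv. rewrite Rinv_mult, <- Rmult_assoc. apply Rmult_le_compat_r; nra.
Qed.

Lemma geo_nrm2_self_bounding G P w y : is_grad N m (Rpower 2 (- B)) (geo N m) G ->
  prob_matrix N m (Rpower 2 (- B)) P -> simplex m w -> (y < N)%nat ->
  nrm2 m (G w P y) <= / (10 / (7 * INR m * B ^ 2)) * codelen y (geo N m w P).
Proof.
  intros HG HP Hw Hy. eapply Rle_trans; [apply (geo_nrm2_le N m _ HN eps_pos); assumption|].
  pose proof (geo_bounds N m HN w P y Hy) as Hq. set (q := geo N m w P y) in *.
  rewrite ln_eps. pose proof ln2_gt. pose proof ln2_lt.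
  assert (Hm0 : 0 < INR m) by (apply lt_0_INR; lia).
  pose proof (ln_le_sub1 q ltac:(lra)).
  unfold codelen, log2. fold q.
  replace (INR m * ((1 - q) * (B * ln 2) / ln 2) ^ 2) with (INR m * B ^ 2 * (1 - q) ^ 2) by (field; lra).
  replace (/ (10 / (7 * INR m * B ^ 2)) * - (ln q / ln 2))
    with (INR m * B ^ 2 * (7 * (- ln q) / (10 * ln 2))) by (field; repeat split; nra).
  apply Rmult_le_compat_l; [apply Rmult_le_pos; [lra|apply pow2_ge_0]|].
  (* [(1 - q)^2 <= 1 - q <= - ln q] and [10 ln 2 <= 7] *)
  apply Rmult_le_reg_r with (10 * ln 2); [lra|].
  unfold Rdiv. rewrite Rmult_assoc, Rinv_l, Rmult_1_r by lra.
  assert ((1 - q) ^ 2 <= 1 - q) by nra. assert (0 <= (1 - q) ^ 2) by apply pow2_ge_0. nra.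
Qed.

Lemma geo_nrm2_bounded G P w y : is_grad N m (Rpower 2 (- B)) (geo N m) G ->
  prob_matrix N m (Rpower 2 (- B)) P -> simplex m w -> (y < N)%nat ->
  nrm2 m (G w P y) <= INR m * B ^ 2.
Proof.
  intros HG HP Hw Hy. eapply Rle_trans; [apply (geo_nrm2_le N m _ HN eps_pos); assumption|].
  pose proof (geo_bounds N m HN w P y Hy) as Hq. rewrite ln_eps. pose proof ln2_gt.
  assert (Hm0 : 0 < INR m) by (apply lt_0_INR; lia).
  replace ((1 - geo N m w P y) * (B * ln 2) / ln 2) with ((1 - geo N m w P y) * B) by (field; lra).
  apply Rmult_le_compat_l; [lra|]. apply pow_incr. nra.
Qed.

Variables (n : nat) (x : nat -> nat) (P : nat -> nat -> nat -> R)
  (proj : (nat -> R) -> (nat -> R)) (w1 : nat -> R).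
Hypothesis Hn : (1 <= n)%nat.
Hypothesis Hx : forall j, (1 <= j <= n)%nat -> (x j < N)%nat.
Hypothesis HP : forall k, (1 <= k <= n)%nat -> prob_matrix N m (Rpower 2 (- B)) (P k).
Hypothesis Hproj : is_simplex_proj m proj.
Hypothesis Hw1 : simplex m w1.

Let step_prob_matrix d : (d < n)%nat -> prob_matrix N m (Rpower 2 (- B)) (P (S d)).
Proof. intros; apply HP; lia. Qed.

Let step_letter d : (d < n)%nat -> (x (S d) < N)%nat.
Proof. intros; apply Hx; lia. Qed.

Let segmentation_INR s t : segmentation n s t -> 1 <= INR s.
Proof. intros [Hs _]. apply (le_INR 1). lia. Qed.

Lemma lin_ogd_const_rate Glin s t : is_grad N m (Rpower 2 (- B)) (lin m) Glin ->
  segmentation n s t ->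
  ogd_len (lin m) Glin proj w1 (8 * B / (17 * INR m * Rpower 4 B)) x P n
  <= 2 * seg_best m x P s t + 17 * INR m * INR s * Rpower 4 B / (4 * B).
Proof.
  intros HG Hseg. pose proof (segmentation_INR s t Hseg). rewrite Rpower4_Rpower2_sqr.
  pose proof (Rpower2_ge_1_plus B). pose proof ln2_gt.
  assert (Hm0 : 2 <= INR m) by (apply (le_INR 2); lia).
  assert (Halpha : 0 < 8 * B / (17 * INR m * Rpower 2 B ^ 2))
    by (apply Rdiv_lt_0_compat; [lra|]; apply Rmult_lt_0_compat; [lra|apply pow_lt; nra]).
  eapply Rle_trans; [apply (ogd_regret_self_bounding m n (lin m) Glin proj w1 _ x P)
    with (s := s) (t := t); try assumption|].
  - lia.
  - intros d w u Hd Hw Hu. apply (lin_codelen_tangent_le N m _ HN eps_pos); auto.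
  - intros d j Hd Hj. unfold codelen. rewrite lin_unit_vec by exact Hj. reflexivity.
  - intros d w Hd Hw. rewrite <- Rpower4_Rpower2_sqr. apply lin_nrm2_self_bounding; auto.
  - right. field. nra.
Qed.

Lemma lin_ogd_sqrt_rate Glin s t : is_grad N m (Rpower 2 (- B)) (lin m) Glin ->
  segmentation n s t ->
  ogd_len (lin m) Glin proj w1 (8 * B / sqrt (INR n) / (17 * INR m * Rpower 4 B)) x P n
  <= seg_best m x P s t + 35 * INR m * INR s * Rpower 4 B / (4 * B) * sqrt (INR n).
Proof.
  intros HG Hseg. pose proof (segmentation_INR s t Hseg). rewrite Rpower4_Rpower2_sqr.
  set (E := Rpower 2 B). pose proof (Rpower2_ge_1_plus B) as HE. fold E in HE.
  pose proof ln2_gt. assert (Hm0 : 2 <= INR m) by (apply (le_INR 2); lia).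
  assert (Hr : 0 < sqrt (INR n)) by (apply sqrt_lt_R0, (lt_INR 0); lia).
  pose proof (sqrt_sqrt (INR n) (pos_INR n)) as Hrr. set (r := sqrt (INR n)) in *.
  assert (Halpha : 0 < 8 * B / r / (17 * INR m * E ^ 2))
    by (apply Rdiv_lt_0_compat; [apply Rdiv_lt_0_compat; lra|];
        apply Rmult_lt_0_compat; [lra|apply pow_lt; nra]).
  eapply Rle_trans;
    [apply (ogd_regret_bounded_grad m n (lin m) Glin proj w1 _ x P) with (s := s) (t := t)
       (Gamma := INR m * (E / ln 2) ^ 2); try assumption|].
  - lia.
  - intros d w u Hd Hw Hu. apply (lin_codelen_tangent_le N m _ HN eps_pos); auto.
  - intros d j Hd Hj. unfold codelen. rewrite lin_unit_vec by exact Hj. reflexivity.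
  - intros d w Hd Hw. apply lin_nrm2_bounded; auto.
  - (* the gradient term [4 B r / (17 ln2^2)] fits in the slack [35/4 - 17/8] *)
    rewrite <- Hrr.
    replace (8 * B / r / (17 * INR m * E ^ 2) / 2 * (r * r * (INR m * (E / ln 2) ^ 2)))
      with (4 * B * r / (17 * ln 2 ^ 2)) by (field; repeat split; try lra; nra).
    replace (INR s / (8 * B / r / (17 * INR m * E ^ 2)))
      with (17 * INR m * INR s * E ^ 2 / (8 * B) * r) by (field; repeat split; try lra; nra).
    pose proof (lin_sqrt_rate_ineq B (INR m * INR s) HB ltac:(nra)) as Hkey. fold E in Hkey.
    assert (Hgrad : 4 * B * r / (17 * ln 2 ^ 2) <= 53 * INR m * INR s * E ^ 2 / (8 * B) * r).
    { apply Rmult_le_reg_r with (8 * B * (17 * ln 2 ^ 2) / r); [apply Rdiv_lt_0_compat; nra|].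
      replace (4 * B * r / (17 * ln 2 ^ 2) * (8 * B * (17 * ln 2 ^ 2) / r)) with (32 * B ^ 2)
        by (field; repeat split; lra).
      replace (53 * INR m * INR s * E ^ 2 / (8 * B) * r * (8 * B * (17 * ln 2 ^ 2) / r))
        with (53 * 17 * ln 2 ^ 2 * (INR m * INR s) * E ^ 2) by (field; repeat split; lra).
      exact Hkey. }
    assert (35 * INR m * INR s * E ^ 2 / (4 * B) * r =
            17 * INR m * INR s * E ^ 2 / (8 * B) * r + 53 * INR m * INR s * E ^ 2 / (8 * B) * r)
      by (field; lra).
    lra.
Qed.

Lemma geo_ogd_const_rate Ggeo s t : is_grad N m (Rpower 2 (- B)) (geo N m) Ggeo ->
  segmentation n s t ->
  ogd_len (geo N m) Ggeo proj w1 (10 / (7 * INR m * B ^ 2)) x P n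
  <= 2 * seg_best m x P s t + 7 * INR m * INR s * B ^ 2 / 5.
Proof.
  intros HG Hseg. pose proof (segmentation_INR s t Hseg).
  assert (Hm0 : 2 <= INR m) by (apply (le_INR 2); lia).
  assert (Halpha : 0 < 10 / (7 * INR m * B ^ 2))
    by (apply Rdiv_lt_0_compat; [lra|]; apply Rmult_lt_0_compat; [lra|apply pow_lt; lra]).
  eapply Rle_trans; [apply (ogd_regret_self_bounding m n (geo N m) Ggeo proj w1 _ x P)
    with (s := s) (t := t); try assumption|].
  - lia.
  - intros d w u Hd Hw Hu. apply (geo_codelen_tangent_le N m (Rpower 2 (- B)) HN); auto.
  - intros d j Hd Hj. unfold codelen. rewrite (geo_unit_vec N m _ HN eps_pos); auto.
  - intros d w Hd Hw. apply geo_nrm2_self_bounding; auto.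
  - right. field. nra.
Qed.

Lemma geo_ogd_sqrt_rate Ggeo s t : is_grad N m (Rpower 2 (- B)) (geo N m) Ggeo ->
  segmentation n s t ->
  ogd_len (geo N m) Ggeo proj w1 (10 / sqrt (INR n) / (7 * INR m * B ^ 2)) x P n
  <= seg_best m x P s t + 19 * INR m * INR s * B ^ 2 / 10 * sqrt (INR n).
Proof.
  intros HG Hseg. pose proof (segmentation_INR s t Hseg).
  assert (Hm0 : 2 <= INR m) by (apply (le_INR 2); lia).
  assert (Hr : 0 < sqrt (INR n)) by (apply sqrt_lt_R0, (lt_INR 0); lia).
  pose proof (sqrt_sqrt (INR n) (pos_INR n)) as Hrr. set (r := sqrt (INR n)) in *.
  assert (Halpha : 0 < 10 / r / (7 * INR m * B ^ 2))
    by (apply Rdiv_lt_0_compat; [apply Rdiv_lt_0_compat; lra|];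
        apply Rmult_lt_0_compat; [lra|apply pow_lt; lra]).
  eapply Rle_trans;
    [apply (ogd_regret_bounded_grad m n (geo N m) Ggeo proj w1 _ x P) with (s := s) (t := t)
       (Gamma := INR m * B ^ 2); try assumption|].
  - lia.
  - intros d w u Hd Hw Hu. apply (geo_codelen_tangent_le N m (Rpower 2 (- B)) HN); auto.
  - intros d j Hd Hj. unfold codelen. rewrite (geo_unit_vec N m _ HN eps_pos); auto.
  - intros d w Hd Hw. apply geo_nrm2_bounded; auto.
  - rewrite <- Hrr.
    replace (10 / r / (7 * INR m * B ^ 2) / 2 * (r * r * (INR m * B ^ 2))) with (5 / 7 * r)
      by (field; repeat split; try lra; nra).
    replace (INR s / (10 / r / (7 * INR m * B ^ 2))) with (7 * INR m * INR s * B ^ 2 / 10 * r)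
      by (field; repeat split; try lra; nra).
    assert (1 <= INR m * INR s) by nra. assert (1 <= B ^ 2) by nra.
    assert (0 <= (INR m * INR s * B ^ 2 - 1) * r) by (apply Rmult_le_pos; nra).
    lra.
Qed.

End Rates.

Theorem theorem2
  (N m : nat) (HN : (1 < N)%nat) (Hm : (1 < m)%nat)
  (B : R) (HB : 1 <= B)
  (n : nat) (Hn : (1 <= n)%nat)
  (x : nat -> nat) (Hx : forall j, (1 <= j <= n)%nat -> (x j < N)%nat)
  (P : nat -> nat -> nat -> R)
  (HP : forall k, (1 <= k <= n)%nat -> prob_matrix N m (Rpower 2 (- B)) (P k))
  (proj : (nat -> R) -> (nat -> R)) (Hproj : is_simplex_proj m proj)
  (Glin Ggeo : (nat -> R) -> (nat -> nat -> R) -> nat -> nat -> R)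
  (HGlin : is_grad N m (Rpower 2 (- B)) (lin m) Glin)
  (HGgeo : is_grad N m (Rpower 2 (- B)) (geo N m) Ggeo)
  (w1 : nat -> R) (Hw1 : simplex m w1) :
  (forall s t, segmentation n s t ->
     ogd_len (lin m) Glin proj w1 (8 * B / (17 * INR m * Rpower 4 B)) x P n
     <= 2 * seg_best m x P s t + 17 * INR m * INR s * Rpower 4 B / (4 * B)) /\
  (forall s t, segmentation n s t ->
     ogd_len (lin m) Glin proj w1 (8 * B / sqrt (INR n) / (17 * INR m * Rpower 4 B)) x P n
     <= seg_best m x P s t + 35 * INR m * INR s * Rpower 4 B / (4 * B) * sqrt (INR n)) /\
  (forall s t, segmentation n s t ->
     ogd_len (geo N m) Ggeo proj w1 (10 / (7 * INR m * B ^ 2)) x P n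
     <= 2 * seg_best m x P s t + 7 * INR m * INR s * B ^ 2 / 5) /\
  (forall s t, segmentation n s t ->
     ogd_len (geo N m) Ggeo proj w1 (10 / sqrt (INR n) / (7 * INR m * B ^ 2)) x P n
     <= seg_best m x P s t + 19 * INR m * INR s * B ^ 2 / 10 * sqrt (INR n)).
Proof.
  repeat split; intros s t Hseg.
  - eapply (lin_ogd_const_rate N m B); eassumption.
  - eapply (lin_ogd_sqrt_rate N m B); eassumption.
  - eapply (geo_ogd_const_rate N m B); eassumption.
  - eapply (geo_ogd_sqrt_rate N m B); eassumption.
Qed.
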